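(* Let $X$ be a topological space with $|X|\ge 2$, $G$ an infinite Abelian group, and $f\colon G\to X$ a Korovin mapping. Then the Korovin orbit $G_f$ is Hausdorff if and only if the space $X$ contains two disjoint nonempty open sets. (In particular, every Korovin orbit in $X^G$ is Hausdorff if and only if some Korovin orbit in $X^G$ is Hausdorff.)
   Context: $X^G$ carries the product topology. For $f\in X^G$ and $g\in G$ let $gf\in X^G$ be given by $(gf)(x)=f(xg)$, and let $G_f=\{gf:g\in G\}\subseteq X^G$ with the subspace topology. The map $f\colon G\to X$ is a Korovin mapping if $\pi_M(G_f)=X^M$ for every countable $M\subseteq G$, where $\pi_M\colon X^G\to X^M$ is the projection; in that case $G_f$ is called a Korovin orbit. *)

From HB Require Import structures.
From mathcomp Require Import all_boot all_order all_algebra.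
From mathcomp Require Import all_classical all_reals all_analysis.
Set Implicit Arguments. Unset Strict Implicit. Unset Printing Implicit Defensive.
Import Order.TTheory GRing.Theory Num.Theory.
Local Open Scope classical_set_scope.
Local Open Scope ring_scope.

(* The abelian group G is written additively (G : zmodType); the action
   (g f)(x) = f(x g) becomes (g f)(x) = f (x + g).  X^G carries the product
   topology: the library's {ptws G -> X}. *)

Definition shift_act (G : zmodType) (X : topologicalType)
  (f : G -> X) (g : G) : {ptws G -> X} := fun x => f (x + g).

Definition orbit_set (G : zmodType) (X : topologicalType) (f : G -> X)
  : set {ptws G -> X} := range (shift_act f).

Definition korovin_mapping (G : zmodType) (X : topologicalType) (f : G -> X)
  : Prop :=
  forall M : set G, countable M ->
  forall h : M -> X,
  exists2 p, orbit_set f p & forall m : M, p (set_val m) = h m.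

From HB Require Import structures.
From mathcomp Require Import all_boot all_order all_algebra.
From mathcomp Require Import all_classical all_reals all_analysis.
Set Implicit Arguments.
Unset Strict Implicit.
Unset Printing Implicit Defensive.
Import GRing.Theory.
Local Open Scope classical_set_scope.
Local Open Scope ring_scope.

(* If U and V are disjoint nonempty open sets, two distinct orbit points af
   and bf are separated by a single coordinate: the Korovin property on {a, b}
   yields g with f (g + a) in U and f (g + b) in V.  If instead any two
   nonempty open subsets of X meet, then so do any two basic open sets of X^G
   with nonempty factors, and the Korovin property on their finite supports
   puts an orbit point in the intersection.  Hence any two nonempty open
   subsets of G_f meet, so a Hausdorff G_f is a single point, which is
   impossible since f maps onto X, and X has two points. *)

Definition cylinder {I X : Type} (S : set I) (W : I -> set X) : set (I -> X) :=
  [set p | forall i, S i -> W i (p i)].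

Lemma cylinderUI {I X : Type} (S S' : set I) (W W' : I -> set X) :
  cylinder (S `|` S') (fun i => W i `&` W' i) `<=` cylinder S W `&` cylinder S' W'.
Proof.
move=> p Wp; split=> i Si.
  by apply: (Wp i _).1; left.
by apply: (Wp i _).2; right.
Qed.

Definition hyperconnected (T : topologicalType) :=
  forall U V : set T, open U -> open V -> U !=set0 -> V !=set0 -> U `&` V !=set0.

Lemma hausdorff_hyperconnected_eq (T : topologicalType) :
  hausdorff_space T -> hyperconnected T -> forall p q : T, p = q.
Proof.
move=> hT hypT p q; apply: hT => A B.
rewrite !nbhsE => -[A0 [oA0 A0p] A0A] [B0 [oB0 B0q] B0B].
have [z [A0z B0z]] := hypT _ _ oA0 oB0 (ex_intro _ p A0p) (ex_intro _ q B0q).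
by exists z; split; [exact: A0A | exact: B0B].
Qed.

Lemma ptws_coord_continuous (I : eqType) (X : topologicalType) (i : I) :
  continuous (fun p : {ptws I -> X} => p i).
Proof. by move=> p; exact: (@proj_continuous I (fun _ => X) i p). Qed.

Lemma ptws_nbhs_cylinder (I : eqType) (X : topologicalType)
    (p : {ptws I -> X}) (A : set {ptws I -> X}) :
  nbhs p A -> exists S W,
    [/\ finite_set S, forall i, open_nbhs (p i) (W i) & cylinder S W `<=` A].
Proof.
pose D := [set SW : set I * (I -> set X) |
  finite_set SW.1 /\ forall i, open_nbhs (p i) (SW.2 i)].
pose F := filter_from D (fun SW => cylinder SW.1 SW.2).
have FF : Filter F.
  apply: filter_from_filter.
    by exists (set0, fun _ => setT); split => // i; exact: open_nbhsT.
  move=> [S W] [S' W'] [fS oW] [fS' oW'].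
  exists (S `|` S', fun i => W i `&` W' i); last exact: cylinderUI.
  by split; [rewrite finite_setU | move=> i; exact: open_nbhsI].
suff /(_ A) : F --> p by move=> /[apply] -[[S W] [? ?] ?]; exists S, W.
apply/cvg_sup => i B; rewrite nbhsE => -[_ [[C oC <-] Cp] CB].
exists ([set i], fun j => if j == i then C else setT); last first.
  by move=> r /(_ i erefl) /=; rewrite eqxx; exact: CB.
split=> /= [|j]; first exact: finite_set1.
by case: eqP => [->|_]; [split | exact: open_nbhsT].
Qed.

Section KorovinOrbit.
Variables (G : zmodType) (X : topologicalType) (f : G -> X).

Lemma orbit_set_shift (g : G) : orbit_set f (shift_act f g).
Proof. by exists g. Qed.

Definition orbit_point (g : G) : set_type (orbit_set f) :=
  exist _ (shift_act f g) (mem_set (orbit_set_shift g)).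

Lemma orbit_pointP (p : set_type (orbit_set f)) : exists g, p = orbit_point g.
Proof.
case: p => _ /[dup] /set_mem [g _ <-] gO; exists g.
by congr exist; exact: Prop_irrelevance.
Qed.

Hypothesis korf : korovin_mapping f.

Lemma korovin_cylinder (S : set G) (W : G -> set X) :
  countable S -> (forall i, S i -> W i !=set0) ->
  exists g, cylinder S W (shift_act f g).
Proof.
move=> cS SW.
have /choice [h Wh] : forall m : S, exists x, W (set_val m) x.
  by case=> m mS; apply: SW; exact: set_mem.
have [_ [g _ <-] gh] := korf cS h.
exists g => i Si; pose m : S := exist _ i (mem_set Si).
by have := gh m; rewrite set_valE /= => ->; exact: Wh m.
Qed.

Lemma korovin_surj (x : X) : exists g, f g = x.
Proof.
have [g gx] : exists g, cylinder [set 0] (fun _ => [set x]) (shift_act f g).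
  by apply: korovin_cylinder => [|i _]; [exact: finite_set_countable | exists x].
by exists g; have := gx 0 erefl; rewrite /shift_act add0r.
Qed.

Lemma korovin_interpolate2 (c d : G) (x y : X) :
  c != d -> exists g, f (g + c) = x /\ f (g + d) = y.
Proof.
move=> cd; pose W i := [set if i == c then x else y].
have [g gW] : exists g, cylinder [set c; d] W (shift_act f g).
  by apply: korovin_cylinder => [|i _]; [exact: finite_set_countable | eexists].
exists g; rewrite addrC [g + d]addrC; split.
  by have := gW c (or_introl erefl); rewrite /W eqxx.
by have := gW d (or_intror erefl); rewrite /W eq_sym (negbTE cd).
Qed.

Lemma korovin_orbit_hyperconnected :
  hyperconnected X -> hyperconnected (set_type (orbit_set f)).
Proof.
move=> hypX _ _ [U oU <-] [V oV <-] [u Uu] [v Vv].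
have [S [W [fS Wu cylU]]] := ptws_nbhs_cylinder (open_nbhs_nbhs (conj oU Uu)).
have [S' [W' [fS' Wv cylV]]] := ptws_nbhs_cylinder (open_nbhs_nbhs (conj oV Vv)).
have [g gW] : exists g,
    cylinder (S `|` S') (fun i => W i `&` W' i) (shift_act f g).
  apply: korovin_cylinder => [|i _].
    by apply: finite_set_countable; rewrite finite_setU.
  apply: hypX; [exact: (Wu i).1 | exact: (Wv i).1 | |].
  - by exists (set_val u i); exact: (Wu i).2.
  - by exists (set_val v i); exact: (Wv i).2.
have [gU gV] := cylinderUI gW.
by exists (orbit_point g); split; [exact: cylU | exact: cylV].
Qed.

Lemma korovin_orbit_hausdorff (U V : set X) :
  open U -> open V -> U !=set0 -> V !=set0 -> U `&` V = set0 ->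
  hausdorff_space (set_type (orbit_set f)).
Proof.
move=> oU oV [u Uu] [v Vv] UV0; rewrite open_hausdorff => p q.
case: (orbit_pointP p) (orbit_pointP q) => [a ->] [b ->] pq.
have ab : a != b by apply: contraNneq pq => ->.
have [g [ga gb]] := korovin_interpolate2 u v ab.
pose coord (A : set X) : set (set_type (orbit_set f)) :=
  [set r | A (set_val r g)].
have open_coord A : open A -> open (coord A).
  move=> oA; exists ((fun r : {ptws G -> X} => r g) @^-1` A) => //.
  by apply: open_comp => // r _; exact: ptws_coord_continuous.
exists (coord U, coord V).
  by split; apply/mem_set; rewrite /coord set_valE /= /shift_act ?ga ?gb.
split; [exact: open_coord | exact: open_coord |].
apply/eqP; rewrite -subset0 => r [Ur Vr].
by rewrite -subset0 in UV0; exact: UV0 (set_val r g) (conj Ur Vr).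
Qed.

End KorovinOrbit.

Theorem proposition4p2 (X : topologicalType) (G : zmodType) (f : G -> X) :
  (exists x y : X, x <> y) ->
  infinite_set [set: G] ->
  korovin_mapping f ->
  (hausdorff_space (set_type (orbit_set f)) <->
   exists U V : set X,
     [/\ open U, open V, U !=set0, V !=set0 & U `&` V = set0]).
Proof.
move=> [x [y xy]] _ korf; split; last first.
  by case=> [U [V [oU oV U0 V0 UV0]]]; exact: korovin_orbit_hausdorff UV0.
move=> hT; apply: contrapT => noUV.
have hypX : hyperconnected X.
  move=> U V oU oV U0 V0; apply/set0P/eqP => UV0.
  by apply: noUV; exists U, V.
have [a fa] := korovin_surj korf x; have [b fb] := korovin_surj korf y.
have := hausdorff_hyperconnected_eq hT (korovin_orbit_hyperconnected korf hypX).
move=> /(_ (orbit_point f a) (orbit_point f b)) /(congr1 (fun p => set_val p 0)).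
by rewrite !set_valE /= /shift_act !add0r fa fb; exact: xy.
Qed.
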